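(* Every CQAP $Q\in\mathrm{CQAP}_0$ with at least one variable has dynamic width $\delta(Q)=0$ and static width $\mathsf w(Q)=1$.
   Context: CQAP. A conjunctive query with free access patterns (CQAP) has the form $Q(\mathcal O\mid\mathcal I)=R_1(\mathcal X_1),\dots,R_n(\mathcal X_n)$, where $R_i(\mathcal X_i)$ are atoms, $\mathit{vars}(Q)=\bigcup_i\mathcal X_i$, and the free variables $\mathcal O\cup\mathcal I\subseteq\mathit{vars}(Q)$ are partitioned into input variables $\mathcal I$ and output variables $\mathcal O$ (either may be empty); the other variables are bound. $\mathit{atoms}(X)$ denotes the set of atoms whose schema contains $X$. Fracture. The fracture $Q_\dagger$ of $Q$ is obtained by: replacing every occurrence of an input variable in every atom by a distinct fresh variable; computing the connected components of the hypergraph of the resulting query (vertices = variables, hyperedges = atom schemas); within each connected component, replacing all fresh variables originating from the same input variable of $Q$ by one fresh input variable. Output and bound variables are unchanged. Structural classes. $B$ dominates $A$ if $\mathit{atoms}(A)\subsetneq\mathit{atoms}(B)$. A CQAP is free-dominant (input-dominant) if whenever $A$ is free (input) and $B$ dominates $A$, then $B$ is free (input). It is hierarchical if for all variables $A,B$: $\mathit{atoms}(A)\subseteq\mathit{atoms}(B)$, or $\mathit{atoms}(B)\subseteq\mathit{atoms}(A)$, or $\mathit{atoms}(A)\cap\mathit{atoms}(B)=\emptyset$. $\mathrm{CQAP}_0$ is the class of CQAPs whose fracture is hierarchical, free-dominant and input-dominant. Variable orders. A variable order (VO) $\omega$ for a CQAP is a rooted forest with exactly one node per variable such that the variables of each atom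 lie on a common root-to-leaf path; $\mathit{dep}_\omega(X)$ is the set of ancestors $Y$ of $X$ that occur in a common atom with some variable of the subtree rooted at $X$. The extended VO adds leaves: each atom becomes a child of its lowest variable; then, processing variables bottom-up, at each variable $X$ with $\mathcal S=\{X\}\cup\mathit{dep}_\omega(X)$ and $\mathcal R$ the set of atoms below $X$, consider candidate indicator atoms $I_{\mathcal Z}R(\mathcal Z)$ for atoms $R(\mathcal Y)$ not in $\mathcal R$ with $\mathcal Z=\mathcal Y\cap\mathcal S\neq\emptyset$; run the GYO reduction (repeatedly delete a vertex occurring in only one hyperedge and a hyperedge contained in another) on the hypergraph whose hyperedges are the schemas of the candidates and of $\mathcal R$, and add as children of $X$ those candidates whose hyperedges survive in the fixpoint. All VOs are extended. A VO is access-top if no bound variable is an ancestor of a free variable and no output variable is an ancestor of an input variable. Widths. For a VO $\omega$ and variable $X$, $\omega_X$ is the subtree rooted at $X$ and $Q_X$ the join of all atoms and indicator atoms at the leaves of $\omega_X$. For a variable set $\mathcal F$, $\rho^*_{Q_X}(\mathcal F)$ is the minimum of $\sum_e\lambda_e$ over $\lambda_e\in[0,1]$ indexed by atoms $e$ of $Q_X$ subject to $\sum_{e\ni Y}\lambda_e\ge1$ for all $Y\in\mathcal F$ (so $\rho^*(\emptyset)=0$). $\mathsf w(\omega)=\max_X\rho^*_{Q_X}(\{X\}\cup\mathit{dep}_\omega(X))$ and $\delta(\omega)=\max_X\max_{R(\mathcal Y)}\rho^*_{Q_X}((\{X\}\cup\mathit{dep}_\omega(X))\setminus\mathcal Y)$,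 the inner maximum over atoms and indicator atoms $R(\mathcal Y)$ at leaves of $\omega_X$. For a CQAP $Q$, $(\delta(Q),\mathsf w(Q))$ is the lexicographically smallest pair $(\delta(\omega),\mathsf w(\omega))$ (first minimise $\delta$, then $\mathsf w$) over all access-top VOs $\omega$ of $Q_\dagger$. *)

From HB Require Import structures.
From mathcomp Require Import all_boot all_order all_algebra.
From mathcomp Require Import reals.

Set Implicit Arguments.
Unset Strict Implicit.
Unset Printing Implicit Defensive.

Import Order.TTheory GRing.Theory Num.Theory.

(* CQAPs.  Variables live in a finite type [qV]; only the variables that     *)
(* occur in some atom are variables of the query ([qvars]).  Atoms are       *)
(* no role in any of the notions involved, so they are not recorded.        *)
Record cqap := CQAP {
  qV : finType;
  qn : nat;
  qschema : 'I_qn -> {set qV};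
  qinp : {set qV};
  qout : {set qV}
}.

Definition qvars (Q : cqap) : {set qV Q} := \bigcup_(i < qn Q) qschema i.

Definition wf_cqap (Q : cqap) : Prop :=
  [/\ qinp Q \subset qvars Q, qout Q \subset qvars Q & [disjoint qinp Q & qout Q]].

Definition qfree (Q : cqap) (x : qV Q) : bool := (x \in qinp Q) || (x \in qout Q).

Definition qatoms (Q : cqap) (x : qV Q) : {set 'I_(qn Q)} :=
  [set i | x \in qschema i].

Definition dominates (Q : cqap) (B A : qV Q) : bool := qatoms A \proper qatoms B.

Definition free_dominant (Q : cqap) : Prop :=
  forall A B, A \in qvars Q -> B \in qvars Q -> qfree A -> dominates B A -> qfree B.

Definition input_dominant (Q : cqap) : Prop :=
  forall A B, A \in qvars Q -> B \in qvars Q ->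
    A \in qinp Q -> dominates B A -> B \in qinp Q.

Definition hierarchical (Q : cqap) : Prop :=
  forall A B, A \in qvars Q -> B \in qvars Q ->
    [\/ qatoms A \subset qatoms B, qatoms B \subset qatoms A
      | qatoms A :&: qatoms B == set0].

(* Step 1: every occurrence of an input variable x in atom i is replaced by  *)
(*   the fresh variable inr (x, i); other variables v become inl v.          *)
(* Step 2: connected components of the resulting hypergraph.                *)
(* Step 3: inr (x, i) is replaced by the fresh input variable inr (x, C),    *)
(*   C the connected component of inr (x, i); other variables stay (inl v). *)
Section Fracture.
Variable Q : cqap.
Local Notation V := (qV Q).
Local Notation n := (qn Q).

Definition frV1 : finType := (V + (V * 'I_n))%type.

Definition frschema1 (i : 'I_n) : {set frV1} :=
  [set (inl v : frV1) | v in qschema i :\: qinp Q] :|: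
  [set (inr (x, i) : frV1) | x in qschema i :&: qinp Q].

Definition fredge1 : rel frV1 :=
  fun a b => [exists i, (a \in frschema1 i) && (b \in frschema1 i)].

Definition frcomp (a : frV1) : {set frV1} := [set b | connect fredge1 a b].

Definition frV2 : finType := (V + (V * {set frV1}))%type.

Definition frmap (a : frV1) : frV2 :=
  match a with
  | inl v => inl v
  | inr (x, i) => inr (x, frcomp (inr (x, i)))
  end.

Definition frschema (i : 'I_n) : {set frV2} := frmap @: frschema1 i.

Definition frinp : {set frV2} :=
  \bigcup_(i < n) [set frmap (inr (x, i)) | x in qschema i :&: qinp Q].

Definition frout : {set frV2} := [set (inl v : frV2) | v in qout Q].

Definition fracture : cqap := @CQAP frV2 n frschema frinp frout.
End Fracture.

Definition CQAP0 (Q : cqap) : Prop :=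
  [/\ hierarchical (fracture Q), free_dominant (fracture Q)
    & input_dominant (fracture Q)].

(* GYO reduction on a labelled hypergraph (labels : finType L, hyperedge     *)
(* [edge l], initially alive labels [L0]).  Vertices occurring in exactly    *)
(* one alive hyperedge are deleted; a hyperedge contained in another alive   *)
(* hyperedge is deleted (for two identical hyperedges the one whose label is *)
(* larger for the tie-break order [prec] is deleted).  Each round performs  *)
(* all such deletions; enough rounds are done to reach the fixpoint.        *)
Section GYO.
Variables (V L : finType) (edge : L -> {set V}) (prec : rel L).

Definition gyo_cur (W : {set V}) (l : L) : {set V} := edge l :&: W.

Definition gyo_vstep (W : {set V}) (A : {set L}) : {set V} :=
  W :\: [set v | #|[set l in A | v \in gyo_cur W l]| == 1%N].

Definition gyo_deletable (W : {set V}) (A : {set L}) (l : L) : bool :=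
  [exists l', [&& l' \in A, l' != l, gyo_cur W l \subset gyo_cur W l'
              & (gyo_cur W l != gyo_cur W l') || prec l' l]].

Definition gyo_step (s : {set V} * {set L}) : {set V} * {set L} :=
  let W' := gyo_vstep s.1 s.2 in
  (W', s.2 :\: [set l in s.2 | gyo_deletable W' s.2 l]).

Definition gyo (L0 : {set L}) : {set V} * {set L} :=
  iter (#|V| + #|L|).+1 gyo_step (setT, L0).
End GYO.

(* Variable orders, given by a parent function on the variables.            *)
Section VO.
Variables (Q : cqap) (par : qV Q -> option (qV Q)).
Local Notation V := (qV Q).
Local Notation n := (qn Q).

Definition parrel : rel V := fun x y => par x == Some y.

(* y is an ancestor-or-self of x *)
Definition anc_eq (x y : V) : bool := connect parrel x y.
Definition anc (x y : V) : bool := [exists z, (par x == Some z) && anc_eq z y].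

Definition is_leaf (z : V) : bool := [forall c, par c != Some z].

(* a rooted forest with exactly one node per variable of Q, such that the    *)
(* variables of each atom lie on a common root-to-leaf path                  *)
Definition is_VO : Prop :=
  [/\ forall x y, par x = Some y -> x \in qvars Q /\ y \in qvars Q,
      forall x, ~~ anc x x
    & forall i : 'I_n, exists z, [/\ z \in qvars Q, is_leaf z &
                              qschema i \subset [set x | anc_eq z x]]].

Definition access_top : Prop :=
  forall x y, x \in qvars Q -> y \in qvars Q -> anc x y ->
    (qfree x -> qfree y) /\ (x \in qinp Q -> y \notin qout Q).

Definition subtree (X : V) : {set V} := [set Z in qvars Q | anc_eq Z X].

Definition dep (X : V) : {set V} :=
  [set Y in qvars Q | anc X Y &&
     [exists i : 'I_n, exists Z in subtree X, (Y \in qschema i) && (Z \in qschema i)]].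

Definition Sset (X : V) : {set V} := X |: dep X.

(* the lowest variable of atom i (the atom becomes a child of it) *)
Definition lowest (i : 'I_n) : option V :=
  [pick x in qschema i | [forall y in qschema i, anc_eq x y]].

Definition below (X : V) (i : 'I_n) : bool :=
  if lowest i is Some x then x \in subtree X else false.

(* indicator atoms at X: GYO on hyperedges inl i (atoms below X) and inr j    *)
(* (candidate indicator atom of atom j) ; tie-break: atoms before candidates *)
Definition ind_lab_rank (l : ('I_n + 'I_n)%type) : nat :=
  match l with inl i => nat_of_ord i | inr j => (n + j)%N end.

Definition ind_edge (X : V) (l : ('I_n + 'I_n)%type) : {set V} :=
  match l with inl i => qschema i | inr j => qschema j :&: Sset X end.

Definition ind_init (X : V) : {set ('I_n + 'I_n)%type} :=
  [set l | match l with
           | inl i => below X i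
           | inr j => ~~ below X j && (qschema j :&: Sset X != set0)
           end].

Definition indicator_at (X : V) (j : 'I_n) : bool :=
  (inr j \in (gyo (ind_edge X) (fun l' l => ind_lab_rank l' < ind_lab_rank l)
                 (ind_init X)).2).

(* leaves of the extended VO: atoms (inl i) and indicator atoms inr (X', j)  *)
(* = I_{Z} R_j(Z) with Z = schema j ∩ ({X'} ∪ dep X') placed under X'.       *)
Definition eatom : finType := ('I_n + (V * 'I_n))%type.

Definition eschema (e : eatom) : {set V} :=
  match e with inl i => qschema i | inr (X', j) => qschema j :&: Sset X' end.

Definition QX (X : V) : {set eatom} :=
  [set e : eatom | match e with
                   | inl i => below X i
                   | inr (X', j) => (X' \in subtree X) && indicator_at X' j
                   end].

Variable R : realType.
Local Open Scope ring_scope.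

Definition rho_star (E : {set eatom}) (F : {set V}) : R :=
  reals.inf (fun r : R => exists lam : eatom -> R,
         [/\ forall e, 0 <= lam e <= 1,
             forall y, y \in F -> 1 <= \sum_(e in E | y \in eschema e) lam e
           & r = \sum_(e in E) lam e]).

Definition static_width : R :=
  \big[Num.max/0]_(X in qvars Q) rho_star (QX X) (Sset X).

Definition dynamic_width : R :=
  \big[Num.max/0]_(X in qvars Q)
     \big[Num.max/0]_(e in QX X) rho_star (QX X) (Sset X :\: eschema e).
End VO.

(* (d, w) is the lexicographically smallest pair (delta(omega), w(omega))    *)
(* over all access-top VOs omega of the fracture of Q                       *)
Definition cqap_widths (R : realType) (Q : cqap) (d w : R) : Prop :=
  let Qf := fracture Q in
  (exists par : qV Qf -> option (qV Qf), [/\ is_VO par, access_top par,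
                   @dynamic_width Qf par R = d & @static_width Qf par R = w]) /\
  (forall par : qV Qf -> option (qV Qf), is_VO par -> access_top par ->
     (d < @dynamic_width Qf par R)%R \/
     (d = @dynamic_width Qf par R /\ (w <= @static_width Qf par R)%R)).

From HB Require Import structures.
From mathcomp Require Import all_boot all_order all_algebra.
From mathcomp Require Import reals.
From mathcomp Require Import zify.

Set Implicit Arguments.
Unset Strict Implicit.
Unset Printing Implicit Defensive.
Import Order.TTheory GRing.Theory Num.Theory.

(* The fracture is hierarchical, so the atom sets of its variables are
   nested or disjoint.  Ordering variables by inclusion of their atom sets,
   with ties broken by placing inputs above outputs above bound variables,
   yields an access-top variable order in which every atom below a variable X
   contains X and all its ancestors.  Hence every indicator atom is removed by
   the GYO reduction, each Q_X is covered by a single atom (static width 1)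
   and ({X} u dep X) \ Y is always empty (dynamic width 0).  No variable order
   does better: widths are nonnegative, and {X} u dep X is nonempty with each
   of its variables in some atom of Q_X, so its fractional edge cover number
   is at least 1. *)

Lemma mem_qvars (P : cqap) i x : x \in qschema i -> x \in qvars P.
Proof. by move=> xi; apply/bigcupP; exists i. Qed.

Section Ancestors.
Variables (P : cqap) (par : qV P -> option (qV P)).
Local Notation anc_eq := (anc_eq par).

Lemma anc_eq_refl x : anc_eq x x. Proof. exact: connect0. Qed.

Lemma anc_eq_trans x y z : anc_eq x y -> anc_eq y z -> anc_eq x z.
Proof. exact: connect_trans. Qed.

Lemma anc_eq_par x y : par x = Some y -> anc_eq x y.
Proof. by move=> xy; apply: connect1; rewrite /parrel xy. Qed.

Lemma anc_eq_parE x y z : anc_eq x y -> x != y -> par x = Some z -> anc_eq z y.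
Proof.
move/connectP=> [p pth lst]; case: p pth lst => [|w p] /= pth lst; first by rewrite lst eqxx.
move=> _ xz; case/andP: pth => /eqP; rewrite xz => -[->] pth.
by apply/connectP; exists p.
Qed.

Lemma anc_eq_total z x y : anc_eq z x -> anc_eq z y -> anc_eq x y || anc_eq y x.
Proof.
move/connectP=> [p]; elim: p z => [|w p IH] z /= pth lst; first by rewrite lst => ->.
case/andP: pth => /eqP zw pth zy; have [<-|nzy] := eqVneq z y.
  by apply/orP; right; apply/connectP; exists (w :: p) => //=; rewrite /parrel zw eqxx.
exact: IH pth lst (anc_eq_parE zy nzy zw).
Qed.

End Ancestors.

Lemma anc_eq_chain_lowest (P : cqap) (par : qV P -> option (qV P)) (S : {set qV P}) z y0 :
  y0 \in S -> S \subset [set x | anc_eq par z x] ->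
  exists2 x, x \in S & forall y, y \in S -> anc_eq par x y.
Proof.
move=> y0S Sz; have [x xS xmax] := arg_maxnP (fun x => #|[set w | anc_eq par x w]|) y0S.
exists x => // y yS; apply/idPn => nxy.
have zx : anc_eq par z x by move/subsetP: Sz => /(_ x xS); rewrite inE.
have zy : anc_eq par z y by move/subsetP: Sz => /(_ y yS); rewrite inE.
have yx : anc_eq par y x by move: (anc_eq_total zx zy); rewrite (negbTE nxy).
have : [set w | anc_eq par x w] \proper [set w | anc_eq par y w].
  apply/properP; split; last by exists y; rewrite !inE ?anc_eq_refl.
  by apply/subsetP=> w; rewrite !inE; apply: anc_eq_trans yx.
by move/proper_card; rewrite ltnNge => /negP; apply; exact: xmax.
Qed.

Section VariableOrder.
Variables (P : cqap) (par : qV P -> option (qV P)).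
Hypothesis VO : is_VO par.

Lemma lowestP i y0 : y0 \in qschema i -> exists x, [/\ lowest par i = Some x,
  x \in qschema i & forall y, y \in qschema i -> anc_eq par x y].
Proof.
move=> y0i; rewrite /lowest; case: pickP => [x /andP[xi /forall_inP]|none].
  by exists x.
have [_ _ /(_ i) [z [_ _ iz]]] := VO.
have [x xi xlow] := anc_eq_chain_lowest y0i iz.
by move: (none x); rewrite xi; move/forall_inP: xlow => ->.
Qed.

Lemma below_self i X : X \in qschema i -> below par X i.
Proof.
move=> Xi; have [w [lw wi wlow]] := lowestP Xi.
by rewrite /below lw /subtree inE (mem_qvars wi) wlow.
Qed.

Lemma Sset_covered X y : X \in qvars P -> y \in Sset par X ->
  exists2 j, below par X j & y \in qschema j.
Proof.
move=> Xv /setU1P[->|]; first by case/bigcupP: Xv => i _ Xi; exists i; rewrite ?below_self.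
rewrite inE => /and3P[_ _ /existsP[j /existsP[Z /and3P[ZX yj Zj]]]].
exists j => //; have [w [lw wi wlow]] := lowestP Zj.
move: ZX; rewrite /below lw !inE (mem_qvars wi) => /andP[_]; exact: anc_eq_trans (wlow Z Zj).
Qed.

End VariableOrder.

Section FractionalEdgeCover.
Variables (P : cqap) (par : qV P -> option (qV P)) (R : realType).
Local Open Scope ring_scope.
Implicit Types (E : {set eatom P}) (F : {set qV P}) (lam : eatom P -> R).

Definition frac_edge_cover E F lam : Prop :=
  (forall e, 0 <= lam e <= 1) /\
  (forall y, y \in F -> 1 <= \sum_(e in E | y \in eschema par e) lam e).

Lemma frac_edge_cover_ge0 E F lam : frac_edge_cover E F lam -> 0 <= \sum_(e in E) lam e.
Proof. by case=> lam01 _; apply: sumr_ge0 => e _; case/andP: (lam01 e). Qed.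

Lemma rho_star_le E F lam : frac_edge_cover E F lam -> rho_star par R E F <= \sum_(e in E) lam e.
Proof.
move=> cov; apply: ge_inf; last by exists lam; case: cov.
by exists 0 => _ [lam' [lam'01 cov' ->]]; apply: (@frac_edge_cover_ge0 E F lam').
Qed.

Lemma rho_star_ge E F c : (exists lam, frac_edge_cover E F lam) ->
  (forall lam, frac_edge_cover E F lam -> c <= \sum_(e in E) lam e) -> c <= rho_star par R E F.
Proof.
move=> [lam cov] lb; apply: lb_le_inf; first by exists (\sum_(e in E) lam e), lam; case: cov.
by move=> _ [lam' [lam'01 cov' ->]]; apply: lb.
Qed.

Lemma frac_edge_cover0 E : frac_edge_cover E set0 (fun=> 0).
Proof. by split=> [e|y]; rewrite ?inE ?lexx ?ler01. Qed.

Lemma rho_star_set0 E : rho_star par R E set0 = 0.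
Proof.
apply: le_anti; apply/andP; split.
  by have := rho_star_le (frac_edge_cover0 E); rewrite big1.
by apply: rho_star_ge; [exists (fun=> 0); apply: frac_edge_cover0 | apply: frac_edge_cover_ge0].
Qed.

Lemma rho_star_le1 E F e0 : e0 \in E -> F \subset eschema par e0 -> rho_star par R E F <= 1.
Proof.
move=> e0E Fe0; pose lam e := if e == e0 then 1 else 0 : R.
have cov : frac_edge_cover E F lam.
  split=> [e|y yF]; first by rewrite /lam; case: eqP; rewrite ?lexx ?ler01.
  rewrite (bigD1 e0) /= ?e0E ?(subsetP Fe0) // /lam eqxx lerDl.
  by apply: sumr_ge0 => e _; case: eqP.
apply: le_trans (rho_star_le cov) _.
by rewrite (bigD1 e0) //= big1 /lam ?eqxx ?addr0 // => e /andP[_ /negbTE ->].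
Qed.

Lemma rho_star_ge1 E F : F != set0 ->
  (forall y, y \in F -> exists2 e, e \in E & y \in eschema par e) -> 1 <= rho_star par R E F.
Proof.
case/set0Pn=> y yF covered; apply: rho_star_ge => [|lam [lam01 cov]].
  exists (fun=> 1); split=> [e|x /covered [e eE xe]]; first by rewrite lexx ler01.
  by rewrite (bigD1 e) /= ?eE ?xe // lerDl sumr_ge0.
apply: le_trans (cov y yF) _; rewrite [leRHS](bigID (fun e => y \in eschema par e)) /= lerDl.
by apply: sumr_ge0 => e _; case/andP: (lam01 e).
Qed.

End FractionalEdgeCover.

Section WidthLowerBound.
Variables (P : cqap) (par : qV P -> option (qV P)) (R : realType).
Hypothesis VO : is_VO par.
Local Open Scope ring_scope.

Lemma rho_star_Sset_ge1 X : X \in qvars P -> 1 <= rho_star par R (QX par X) (Sset par X).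
Proof.
move=> Xv; apply: rho_star_ge1; first by apply/set0Pn; exists X; rewrite setU11.
by move=> y /(Sset_covered VO Xv) [j bj yj]; exists (inl j); rewrite // inE.
Qed.

Lemma static_width_ge1 : qvars P != set0 -> 1 <= static_width par R.
Proof.
by case/set0Pn=> X Xv; apply: (bigmax_sup X) => //; apply: rho_star_Sset_ge1.
Qed.

Lemma widths_lex_ge : qvars P != set0 ->
  0 < dynamic_width par R \/ 0 = dynamic_width par R /\ 1 <= static_width par R.
Proof.
move=> nonempty; have : 0 <= dynamic_width par R by apply: bigmax_ge_id.
by rewrite le_eqVlt => /orP[/eqP dyn0|]; [right; split; last apply: static_width_ge1 | left].
Qed.

End WidthLowerBound.

Lemma gyo_dominated (V L : finType) (edge : L -> {set V}) (prec : rel L) (L0 : {set L}) l l' :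
  l' \in L0 -> l' != l -> edge l \subset edge l' -> prec l' l -> l \notin (gyo edge prec L0).2.
Proof.
move=> l'L0 l'l sub prec_l'l; rewrite /gyo iterSr.
set s := gyo_step _ _ _; have : l \notin s.2.
  rewrite in_setD inE negb_and negbK orbC; case: (l \in L0) => //=.
  apply/existsP; exists l'; rewrite l'L0 l'l prec_l'l orbT andbT /=.
  exact: setSI.
elim: (_ + _)%N => [//|k IH] /IH lk; by rewrite /= in_setD (negbTE lk) andbF.
Qed.

Section CanonicalVO.
Variable P : cqap.
Local Notation V := (qV P).
Hypotheses (hier : hierarchical P) (fdom : free_dominant P) (idom : input_dominant P).
Hypothesis io_disj : [disjoint qinp P & qout P].
Hypothesis nonempty : qvars P != set0.

(* Variables are ranked lexicographically by their number of atoms, then by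
   kind (input > output > bound), then by an arbitrary enumeration; the parent
   of y is the least-ranked variable above y whose atoms contain those of y. *)
Definition kind_rank (v : V) : nat :=
  if v \in qinp P then 2 else if v \in qout P then 1 else 0.
Definition weight (v : V) : nat := #|qatoms v| * 3 + kind_rank v.
Definition key (v : V) : nat := weight v * #|V| + enum_rank v.

Lemma kind_rank_lt3 v : kind_rank v < 3.
Proof. by rewrite /kind_rank; case: ifP => //; case: ifP. Qed.

Lemma qfree_kind_rank v : qfree v = (0 < kind_rank v).
Proof. by rewrite /qfree /kind_rank; case: (v \in qinp P); case: (v \in qout P). Qed.

Lemma qinp_kind_rank v : (v \in qinp P) = (1 < kind_rank v).
Proof. by rewrite /kind_rank; case: (v \in qinp P); case: (v \in qout P). Qed.

Lemma key_inj : injective key.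
Proof.
move=> x y /(congr1 (modn^~ #|V|)); rewrite !modnMDl !modn_small ?ltn_ord //.
by move/val_inj/enum_rank_inj.
Qed.

Lemma key_lt x y : weight x < weight y -> key x < key y.
Proof.
move=> lt_w; rewrite /key; apply: (@leq_trans ((weight x).+1 * #|V|)).
  by rewrite mulSnr ltn_add2l ltn_ord.
by apply: leq_trans (leq_addr _ _); rewrite leq_mul2r lt_w orbT.
Qed.

Lemma weight_proper x y : qatoms x \proper qatoms y -> weight x < weight y.
Proof. by move/proper_card; rewrite /weight; have := kind_rank_lt3 x; lia. Qed.

Definition parent_cand (y x : V) : bool :=
  [&& x \in qvars P, qatoms y \subset qatoms x & key y < key x].

Definition cpar (y : V) : option V :=
  if y \in qvars P then
    [pick x | parent_cand y x && [forall x', parent_cand y x' ==> (key x <= key x')]]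
  else None.

Lemma cparP y x : cpar y = Some x ->
  [/\ y \in qvars P, parent_cand y x & forall x', parent_cand y x' -> key x <= key x'].
Proof.
rewrite /cpar; case: ifP => // yv; case: pickP => // z /andP[c /forallP h] [<-].
by split => // x' cx'; move: (h x'); rewrite cx'.
Qed.

Lemma cpar_exists y x : y \in qvars P -> parent_cand y x -> exists p, cpar y = Some p.
Proof.
move=> yv c; rewrite /cpar yv; case: pickP => [p _|none]; first by exists p.
have [m cm mmin] := arg_minnP key c.
by move: (none m); rewrite cm /=; move/negbT/negP; case; apply/forall_inP.
Qed.

Lemma cpar_mono x y : cpar x = Some y -> qatoms x \subset qatoms y /\ key x < key y.
Proof. by case/cparP => _ /and3P[]. Qed.

Lemma anc_eq_mono x y : anc_eq cpar x y -> qatoms x \subset qatoms y /\ key x <= key y.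
Proof.
move/connectP=> [p]; elim: p x => [|w p IH] x /= pth lst; first by rewrite lst subxx leqnn.
case/andP: pth => /eqP /cpar_mono [s1 l1] /IH /(_ lst) [s2 l2].
by split; [apply: subset_trans s2 | apply: leq_trans (ltnW l1) l2].
Qed.

Lemma anc_mono x y : anc cpar x y -> qatoms x \subset qatoms y /\ key x < key y.
Proof.
move/existsP=> [z /andP[/eqP /cpar_mono [s1 l1] /anc_eq_mono [s2 l2]]].
by split; [apply: subset_trans s2 | apply: leq_trans l1 l2].
Qed.

Lemma atoms_sub_of_key_le i x y : x \in qvars P -> y \in qvars P ->
  i \in qatoms x -> i \in qatoms y -> key x <= key y -> qatoms x \subset qatoms y.
Proof.
move=> xv yv ix iy le_xy; case: (hier xv yv) => [//|yx|/eqP xy0].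
  have [<-|nxy] := eqVneq (qatoms y) (qatoms x); first exact: subxx.
  have /weight_proper/key_lt : qatoms y \proper qatoms x by rewrite properEneq nxy.
  by rewrite ltnNge le_xy.
have : i \in qatoms x :&: qatoms y by rewrite inE ix iy.
by rewrite xy0 inE.
Qed.

Lemma anc_eq_shared_atom i x y : x \in qschema i -> y \in qschema i ->
  key x <= key y -> anc_eq cpar x y.
Proof.
move=> xi yi; have yv := mem_qvars yi; have iy : i \in qatoms y by rewrite inE.
have [n] := ubnP (key y - key x); elim: n => // n IH in x xi *.
move=> lt_n le_xy; have [->|nxy] := eqVneq x y; first exact: anc_eq_refl.
have lt_xy : key x < key y by rewrite ltn_neqAle le_xy andbT (inj_eq key_inj).
have xv := mem_qvars xi; have ix : i \in qatoms x by rewrite inE.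
have c : parent_cand x y by rewrite /parent_cand yv lt_xy (atoms_sub_of_key_le xv yv ix iy le_xy).
have [p xp] := cpar_exists xv c; have [_ /and3P[_ sxp lxp] pmin] := cparP xp.
have [<-|npy] := eqVneq p y; first exact: anc_eq_par.
apply: anc_eq_trans (anc_eq_par xp) (IH p _ _ _); [|lia|exact: pmin].
by move/subsetP: sxp => /(_ i ix); rewrite inE.
Qed.

Lemma qschema_on_branch i :
  exists2 c, c \in qvars P & qschema i \subset [set x | anc_eq cpar c x].
Proof.
have [/eqP->|/set0Pn [y0 y0i]] := boolP (qschema i == set0).
  by case/set0Pn: nonempty => c cv; exists c; rewrite ?sub0set.
have [x0 x0i x0min] := arg_minnP key y0i; exists x0; first exact: mem_qvars x0i.
by apply/subsetP => y yi; rewrite inE (anc_eq_shared_atom x0i yi (x0min y yi)).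
Qed.

Lemma cpar_VO : is_VO cpar.
Proof.
split=> [x y /cparP [xv /and3P[yv _ _] _] //|x|i].
  by apply/negP => /anc_mono [_]; rewrite ltnn.
pose S := [set c in qvars P | qschema i \subset [set x | anc_eq cpar c x]].
have [c0 c0v c0i] := qschema_on_branch i; have c0S : c0 \in S by rewrite inE c0v.
have [z zS zmin] := arg_minnP key c0S; have /setIdP[zv zi] : z \in S := zS.
exists z; split => //; apply/forallP => c; apply/eqP => cz.
have [cv _ _] := cparP cz; have [_ lt_cz] := cpar_mono cz.
have cS : c \in S.
  rewrite inE cv; apply/subsetP => x /(subsetP zi); rewrite !inE.
  exact: anc_eq_trans (anc_eq_par cz).
by move: (zmin c cS); rewrite leqNgt lt_cz.
Qed.

Lemma anc_atoms x y : anc cpar x y ->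
  qatoms x \proper qatoms y \/ qatoms x = qatoms y /\ kind_rank x <= kind_rank y.
Proof.
move=> /anc_mono [sub lt_xy]; rewrite properEneq sub andbT.
have [eq_xy|] := eqVneq (qatoms x) (qatoms y); [right; split => // | by left].
rewrite leqNgt; apply/negP => lt_rk; suff : key y < key x by rewrite ltnNge ltnW.
by apply: key_lt; rewrite /weight eq_xy ltn_add2l.
Qed.

Lemma cpar_access_top : access_top cpar.
Proof.
move=> x y xv yv /anc_atoms [prop|[_ rk]]; split.
- by move=> fx; apply: fdom prop.
- by move=> xi; rewrite (disjointFr io_disj (idom xv yv xi prop)).
- by rewrite !qfree_kind_rank => /leq_trans; apply.
- by rewrite qinp_kind_rank => /leq_trans /(_ rk); rewrite -qinp_kind_rank => /(disjointFr io_disj) ->.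
Qed.

Lemma below_Sset_sub X i : below cpar X i -> Sset cpar X \subset qschema i.
Proof.
rewrite /below /lowest; case: pickP => // w /andP[wi _].
rewrite inE => /andP[_ /anc_eq_mono [wX _]].
have iX : i \in qatoms X by apply: (subsetP wX); rewrite inE.
apply/subsetP => y /setU1P[->|]; first by rewrite inE in iX.
rewrite inE => /and3P[_ /anc_mono [Xy _] _].
by have := subsetP Xy i iX; rewrite inE.
Qed.

Lemma indicator_at_cpar X j : X \in qvars P -> indicator_at cpar X j = false.
Proof.
case/bigcupP => i _ Xi; have bi := below_self cpar_VO Xi.
(* the candidate is contained in the atom i below X, which wins the tie-break *)
apply/negbTE; apply: (@gyo_dominated _ _ _ _ _ _ (inl i)) => //=.
- by rewrite inE.
- exact: subset_trans (subsetIr _ _) (below_Sset_sub bi).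
- exact: leq_trans (ltn_ord i) (leq_addr _ _).
Qed.

Lemma QX_Sset_sub X e : e \in QX cpar X -> Sset cpar X \subset eschema cpar e.
Proof.
case: e => [i|[X' j]]; rewrite inE; first exact: below_Sset_sub.
by rewrite inE => /andP[/andP[X'v _]]; rewrite indicator_at_cpar.
Qed.

Variable R : realType.
Local Open Scope ring_scope.

Lemma dynamic_width_cpar : dynamic_width cpar R = 0.
Proof.
apply: bigmax_eq_id => X _; apply: bigmax_le => // e eX.
have /eqP -> : Sset cpar X :\: eschema cpar e == set0 by rewrite setD_eq0 QX_Sset_sub.
by rewrite rho_star_set0.
Qed.

Lemma static_width_cpar : static_width cpar R = 1.
Proof.
apply: le_anti; rewrite (static_width_ge1 _ cpar_VO nonempty) andbT.
apply: bigmax_le => [|X /bigcupP [i _ Xi]]; first exact: ler01.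
have bi := below_self cpar_VO Xi.
by apply: (@rho_star_le1 _ _ _ _ _ (inl i)); [rewrite inE | apply: below_Sset_sub].
Qed.

End CanonicalVO.

Lemma fracture_io_disjoint (Q : cqap) : [disjoint qinp (fracture Q) & qout (fracture Q)].
Proof.
rewrite -setI_eq0; apply/eqP/setP => v; rewrite !inE.
by apply/andP => -[/bigcupP [i _ /imsetP [x _ ->]] /imsetP [u _]].
Qed.

Lemma fracture_vars_neq0 (Q : cqap) : qvars Q != set0 -> qvars (fracture Q) != set0.
Proof.
case/set0Pn => v /bigcupP [i _ vi].
have : frschema1 i != set0.
  apply/set0Pn; have [vI|vnI] := boolP (v \in qinp Q).
    by exists (inr (v, i)); apply/setUP; right; apply: imset_f; rewrite inE vi vI.
  by exists (inl v); apply/setUP; left; apply: imset_f; rewrite inE vi vnI.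
rewrite -(imset_eq0 (@frmap Q)) => /set0Pn [x xi]; apply/set0Pn.
by exists x; apply: (@mem_qvars (fracture Q) i).
Qed.

Theorem proposition9p2 (R : realType) (Q : cqap) :
  wf_cqap Q -> qvars Q != set0 -> CQAP0 Q ->
  @cqap_widths R Q 0%R 1%R.
Proof.
move=> _ /fracture_vars_neq0 nonempty [hier fdom idom]; split; last first.
  by move=> par VO _; apply: widths_lex_ge.
have io_disj := fracture_io_disjoint Q.
exists (@cpar (fracture Q)); split.
- exact: cpar_VO.
- exact: cpar_access_top.
- exact: dynamic_width_cpar.
- exact: static_width_cpar.
Qed.
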